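(* Under the setting of structured quadratic-bilinear systems and projection-based reduction, let $\sigma_1,\sigma_2\in\mathbb C$ be such that $\mathcal C,\mathcal K,\mathcal B,\mathcal N,\mathcal H$ can be evaluated at $\sigma_1,\sigma_2,\sigma_1+\sigma_2$ (and $\mathcal H$ at $(\sigma_1,\sigma_2),(\sigma_2,\sigma_1)$) and $\mathcal K(\sigma_1),\mathcal K(\sigma_2),\mathcal K(\sigma_1+\sigma_2)$ are invertible. Let $V_{1,1}=\mathcal K(\sigma_1)^{-1}\mathcal B(\sigma_1)$ and $V_{1,2}=\mathcal K(\sigma_2)^{-1}\mathcal B(\sigma_2)$. Let $V,W\in\mathbb C^{n\times r}$ have full column rank with $$\operatorname{span}(V)\supseteq\operatorname{span}([V_{1,1}\ V_{1,2}]),\qquad \operatorname{span}(W)\supseteq\operatorname{span}\big(\mathcal K(\sigma_1+\sigma_2)^{-\mathsf H}\mathcal C(\sigma_1+\sigma_2)^{\mathsf H}\big),$$ and assume $W^{\mathsf H}\mathcal K(s)V$ is invertible for $s\in\{\sigma_1,\sigma_2,\sigma_1+\sigma_2\}$. Then $$G_1(\sigma_1)=\widehat G_1(\sigma_1),\ G_1(\sigma_2)=\widehat G_1(\sigma_2),\ G_1(\sigma_1+\sigma_2)=\widehat G_1(\sigma_1+\sigma_2),\ G_2(\sigma_1,\sigma_2)=\widehat G_2(\sigma_1,\sigma_2).$$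
   Context: A structured quadratic-bilinear system (in frequency domain) with $n$ states, $m$ inputs and $p$ outputs is given by matrix-valued functions $\mathcal C:\mathbb C\to\mathbb C^{p\times n}$, $\mathcal K:\mathbb C\to\mathbb C^{n\times n}$, $\mathcal B:\mathbb C\to\mathbb C^{n\times m}$, $\mathcal N:\mathbb C\to\mathbb C^{n\times nm}$ with $\mathcal N(s)=[\mathcal N_1(s)\ \cdots\ \mathcal N_m(s)]$, $\mathcal N_j(s)\in\mathbb C^{n\times n}$, and $\mathcal H:\mathbb C\times\mathbb C\to\mathbb C^{n\times n^2}$. Its structured symmetric subsystem transfer functions are $G_1(s_1)=\mathcal C(s_1)g_1(s_1)$, $G_2(s_1,s_2)=\mathcal C(s_1+s_2)g_2(s_1,s_2)$, where $g_1(s_1)=\mathcal K(s_1)^{-1}\mathcal B(s_1)$ and $g_2(s_1,s_2)=\tfrac12\mathcal K(s_1+s_2)^{-1}\big(\mathcal H(s_1,s_2)(g_1(s_1)\otimes g_1(s_2))+\mathcal H(s_2,s_1)(g_1(s_2)\otimes g_1(s_1))+\mathcal N(s_1)(I_m\otimes g_1(s_1))+\mathcal N(s_2)(I_m\otimes g_1(s_2))\big)$, wherever the inverses exist; $\otimes$ is the Kronecker product. The reduced-order system obtained by projection with $V,W\in\mathbb C^{n\times r}$ is given by $\widehat{\mathcal C}(s)=\mathcal C(s)V$, $\widehat{\mathcal K}(s)=W^{\mathsf H}\mathcal K(s)V$, $\widehat{\mathcal B}(s)=W^{\mathsf H}\mathcal B(s)$, $\widehat{\mathcal N}(s)=W^{\mathsf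 H}\mathcal N(s)(I_m\otimes V)$, $\widehat{\mathcal H}(s_1,s_2)=W^{\mathsf H}\mathcal H(s_1,s_2)(V\otimes V)$, where $W^{\mathsf H}$ is the conjugate transpose and $\mathcal K(s)^{-\mathsf H}=(\mathcal K(s)^{-1})^{\mathsf H}$; its transfer functions $\widehat G_k$ are defined by the same formulas with hatted functions. *)

From mathcomp Require Import all_boot all_order all_algebra.
From mathcomp Require Export mxtens.
Set Implicit Arguments. Unset Strict Implicit. Unset Printing Implicit Defensive.
Import Order.TTheory GRing.Theory Num.Theory.
Local Open Scope ring_scope.

Definition ctmx (C : numClosedFieldType) (m n : nat) (A : 'M[C]_(m, n)) : 'M[C]_(n, m) :=
  (map_mx Num.conj A)^T.

Definition sqb_g1 (C : numClosedFieldType) (k m : nat)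
  (K : C -> 'M[C]_k) (B : C -> 'M[C]_(k, m)) (s : C) : 'M[C]_(k, m) :=
  invmx (K s) *m B s.

Definition sqb_G1 (C : numClosedFieldType) (k m p : nat)
  (Cf : C -> 'M[C]_(p, k)) (K : C -> 'M[C]_k) (B : C -> 'M[C]_(k, m)) (s : C)
  : 'M[C]_(p, m) :=
  Cf s *m sqb_g1 K B s.

(* g_2(s1,s2), with N(s) = [N_1(s) ... N_m(s)] : k x (k m) and H(s1,s2) : k x k^2;
   *t is the Kronecker product. *)
Definition sqb_g2 (C : numClosedFieldType) (k m : nat)
  (K : C -> 'M[C]_k) (B : C -> 'M[C]_(k, m)) (N : C -> 'M[C]_(k, m * k))
  (H : C -> C -> 'M[C]_(k, k * k)) (s1 s2 : C) : 'M[C]_(k, m * m) :=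
  2^-1 *: (invmx (K (s1 + s2)) *m
     (H s1 s2 *m (sqb_g1 K B s1 *t sqb_g1 K B s2)
    + H s2 s1 *m (sqb_g1 K B s2 *t sqb_g1 K B s1)
    + N s1 *m ((1%:M : 'M[C]_m) *t sqb_g1 K B s1)
    + N s2 *m ((1%:M : 'M[C]_m) *t sqb_g1 K B s2))).

Definition sqb_G2 (C : numClosedFieldType) (k m p : nat)
  (Cf : C -> 'M[C]_(p, k)) (K : C -> 'M[C]_k) (B : C -> 'M[C]_(k, m))
  (N : C -> 'M[C]_(k, m * k)) (H : C -> C -> 'M[C]_(k, k * k)) (s1 s2 : C)
  : 'M[C]_(p, m * m) :=
  Cf (s1 + s2) *m sqb_g2 K B N H s1 s2.

Definition red_C (C : numClosedFieldType) (n r p : nat)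
  (V : 'M[C]_(n, r)) (Cf : C -> 'M[C]_(p, n)) : C -> 'M[C]_(p, r) :=
  fun s => Cf s *m V.
Definition red_K (C : numClosedFieldType) (n r : nat)
  (V W : 'M[C]_(n, r)) (K : C -> 'M[C]_n) : C -> 'M[C]_r :=
  fun s => ctmx W *m K s *m V.
Definition red_B (C : numClosedFieldType) (n r m : nat)
  (W : 'M[C]_(n, r)) (B : C -> 'M[C]_(n, m)) : C -> 'M[C]_(r, m) :=
  fun s => ctmx W *m B s.
Definition red_N (C : numClosedFieldType) (n r m : nat)
  (V W : 'M[C]_(n, r)) (N : C -> 'M[C]_(n, m * n)) : C -> 'M[C]_(r, m * r) :=
  fun s => ctmx W *m N s *m ((1%:M : 'M[C]_m) *t V).
Definition red_H (C : numClosedFieldType) (n r : nat)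
  (V W : 'M[C]_(n, r)) (H : C -> C -> 'M[C]_(n, n * n)) : C -> C -> 'M[C]_(r, r * r) :=
  fun s1 s2 => ctmx W *m H s1 s2 *m (V *t V).

From mathcomp Require Import all_boot all_order all_algebra.
Import GRing.Theory Num.Theory.
Local Open Scope ring_scope.

(* Write A for K(s) and  Â = W^H A V  for its projection.
   Two matrix facts carry the whole argument:
   - right interpolation: if A^{-1} B lies in span(V), then the reduced
     solution lifts back exactly,  V Â^{-1} W^H B = A^{-1} B;
   - left interpolation: if A^{-H} C^H lies in span(W), i.e. C A^{-1} = Z^H W^H,
     then  C V Â^{-1} W^H X = C A^{-1} X  for every right factor X.
   Right interpolation at sigma1, sigma2 gives V ĝ1(sigma_i) = g1(sigma_i), hence
   G1(sigma_i) = Ĝ1(sigma_i), and, through the Kronecker mixed-product rule, the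
   reduced right-hand side of the g2 equation is W^H times the full one.  Left
   interpolation at sigma1 + sigma2 then yields G1(sigma1 + sigma2) and
   G2(sigma1, sigma2). *)

Section Interpolation.
Context {C : numClosedFieldType}.

Lemma ctmxM a b c (X : 'M[C]_(a, b)) (Y : 'M[C]_(b, c)) :
  ctmx (X *m Y) = ctmx Y *m ctmx X.
Proof. by rewrite /ctmx map_mxM trmx_mul. Qed.

Lemma ctmxK a b (X : 'M[C]_(a, b)) : ctmx (ctmx X) = X.
Proof. by apply/matrixP=> i j; rewrite /ctmx !mxE conjCK. Qed.

(* Column-space inclusion span(X) <= span(V), phrased on row spaces of the
   transposes, means that X factors through V. *)
Lemma colspace_factor n r k (X : 'M[C]_(n, k)) (V : 'M[C]_(n, r)) :
  (X^T <= V^T)%MS -> exists Y, X = V *m Y.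
Proof.
by case/submxP=> D HD; exists D^T; rewrite -[X]trmxK HD trmx_mul trmxK.
Qed.

Lemma galerkin_right n r m (A : 'M[C]_n) (Bm : 'M[C]_(n, m))
    (V W : 'M[C]_(n, r)) (Y : 'M[C]_(r, m)) :
  A \in unitmx -> ctmx W *m A *m V \in unitmx -> invmx A *m Bm = V *m Y ->
  V *m (invmx (ctmx W *m A *m V) *m (ctmx W *m Bm)) = invmx A *m Bm.
Proof.
move=> A_unit redA_unit sol_inV.
have -> : ctmx W *m Bm = (ctmx W *m A *m V) *m Y.
  by rewrite -!mulmxA -sol_inV mulKVmx.
by rewrite mulKmx.
Qed.

Lemma galerkin_left n r p q (A : 'M[C]_n) (Cm : 'M[C]_(p, n))
    (V W : 'M[C]_(n, r)) (Z : 'M[C]_(r, p)) (X : 'M[C]_(n, q)) :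
  A \in unitmx -> ctmx W *m A *m V \in unitmx ->
  ctmx (invmx A) *m ctmx Cm = W *m Z ->
  Cm *m V *m invmx (ctmx W *m A *m V) *m (ctmx W *m X) = Cm *m invmx A *m X.
Proof.
move=> A_unit redA_unit dual_inW.
have CAinv : Cm *m invmx A = ctmx Z *m ctmx W.
  by rewrite -ctmxM -dual_inW -ctmxM ctmxK.
have CV : Cm *m V = ctmx Z *m (ctmx W *m A *m V).
  by rewrite -[Cm](mulmxKV A_unit) CAinv !mulmxA.
by rewrite CV mulmxK // CAinv !mulmxA.
Qed.

End Interpolation.

Arguments colspace_factor {C n r k X V}.
Arguments galerkin_right {C n r m A Bm V W Y}.
Arguments galerkin_left {C n r p q A Cm V W Z X}.

Section ReducedSystem.
Context {C : numClosedFieldType} {n m p r : nat}.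
Context {Cf : C -> 'M[C]_(p, n)} {K : C -> 'M[C]_n} {B : C -> 'M[C]_(n, m)}.
Context {N : C -> 'M[C]_(n, m * n)} {H : C -> C -> 'M[C]_(n, n * n)}.
Context {V W : 'M[C]_(n, r)}.

Let Kr := red_K V W K.
Let Br := red_B W B.

Definition sqb_rhs {k : nat} (Kk : C -> 'M[C]_k) (Bk : C -> 'M[C]_(k, m))
    (Nk : C -> 'M[C]_(k, m * k)) (Hk : C -> C -> 'M[C]_(k, k * k)) (s1 s2 : C)
    : 'M[C]_(k, m * m) :=
  Hk s1 s2 *m (sqb_g1 Kk Bk s1 *t sqb_g1 Kk Bk s2)
  + Hk s2 s1 *m (sqb_g1 Kk Bk s2 *t sqb_g1 Kk Bk s1)
  + Nk s1 *m ((1%:M : 'M[C]_m) *t sqb_g1 Kk Bk s1)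
  + Nk s2 *m ((1%:M : 'M[C]_m) *t sqb_g1 Kk Bk s2).

Lemma sqb_g2E k (Kk : C -> 'M[C]_k) (Bk : C -> 'M[C]_(k, m))
    (Nk : C -> 'M[C]_(k, m * k)) (Hk : C -> C -> 'M[C]_(k, k * k)) (s1 s2 : C) :
  sqb_g2 Kk Bk Nk Hk s1 s2
  = 2^-1 *: (invmx (Kk (s1 + s2)) *m sqb_rhs Kk Bk Nk Hk s1 s2).
Proof. by []. Qed.

Lemma red_g1_lift {s : C} {Y : 'M[C]_(r, m)} :
  K s \in unitmx -> Kr s \in unitmx -> sqb_g1 K B s = V *m Y ->
  V *m sqb_g1 Kr Br s = sqb_g1 K B s.
Proof. exact: galerkin_right. Qed.

Lemma red_G1_right s :
  V *m sqb_g1 Kr Br s = sqb_g1 K B s ->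
  sqb_G1 Cf K B s = sqb_G1 (red_C V Cf) Kr Br s.
Proof. by rewrite /sqb_G1 /red_C -mulmxA => ->. Qed.

Lemma red_G1_left {s : C} {Z : 'M[C]_(r, p)} :
  K s \in unitmx -> Kr s \in unitmx ->
  ctmx (invmx (K s)) *m ctmx (Cf s) = W *m Z ->
  sqb_G1 Cf K B s = sqb_G1 (red_C V Cf) Kr Br s.
Proof.
move=> Ks_unit Krs_unit dual_inW.
by rewrite /sqb_G1 /sqb_g1 /red_C [RHS]mulmxA (galerkin_left Ks_unit Krs_unit dual_inW) mulmxA.
Qed.

(* If V ĝ1 reproduces g1 at s1 and s2, the reduced right-hand side of the g2
   equation is the projection W^H of the full one: by the mixed-product rule
   (V ⊗ V)(ĝ1 ⊗ ĝ1) = g1 ⊗ g1 and (I ⊗ V)(I ⊗ ĝ1) = I ⊗ g1. *)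
Lemma red_rhs s1 s2 :
  V *m sqb_g1 Kr Br s1 = sqb_g1 K B s1 ->
  V *m sqb_g1 Kr Br s2 = sqb_g1 K B s2 ->
  sqb_rhs Kr Br (red_N V W N) (red_H V W H) s1 s2
  = ctmx W *m sqb_rhs K B N H s1 s2.
Proof.
move=> lift1 lift2.
by rewrite /sqb_rhs /red_H /red_N -!mulmxA !tensmx_mul !mulmx1 lift1 lift2
  -!mulmxDr.
Qed.

Lemma red_G2 {s1 s2 : C} {Z : 'M[C]_(r, p)} :
  K (s1 + s2) \in unitmx -> Kr (s1 + s2) \in unitmx ->
  ctmx (invmx (K (s1 + s2))) *m ctmx (Cf (s1 + s2)) = W *m Z ->
  V *m sqb_g1 Kr Br s1 = sqb_g1 K B s1 ->
  V *m sqb_g1 Kr Br s2 = sqb_g1 K B s2 ->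
  sqb_G2 Cf K B N H s1 s2
  = sqb_G2 (red_C V Cf) Kr Br (red_N V W N) (red_H V W H) s1 s2.
Proof.
move=> K_unit Kr_unit dual_inW lift1 lift2.
rewrite /sqb_G2 !sqb_g2E red_rhs // -!scalemxAr /red_C.
by rewrite [in RHS]mulmxA (galerkin_left K_unit Kr_unit dual_inW) mulmxA.
Qed.

End ReducedSystem.

Theorem proposition4p2 (C : numClosedFieldType) (n m p r : nat)
  (Cf : C -> 'M[C]_(p, n)) (K : C -> 'M[C]_n) (B : C -> 'M[C]_(n, m))
  (N : C -> 'M[C]_(n, m * n)) (H : C -> C -> 'M[C]_(n, n * n))
  (sigma1 sigma2 : C) (V W : 'M[C]_(n, r)) :
  K sigma1 \in unitmx -> K sigma2 \in unitmx -> K (sigma1 + sigma2) \in unitmx ->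
  \rank V = r -> \rank W = r ->
  (* span(V) contains span([V11 V12]) (column spaces) *)
  ((row_mx (invmx (K sigma1) *m B sigma1) (invmx (K sigma2) *m B sigma2))^T
     <= V^T)%MS ->
  (* span(W) contains span(K(s1+s2)^{-H} C(s1+s2)^H) *)
  ((ctmx (invmx (K (sigma1 + sigma2)%R)) *m ctmx (Cf (sigma1 + sigma2)%R))^T
     <= W^T)%MS ->
  red_K V W K sigma1 \in unitmx -> red_K V W K sigma2 \in unitmx ->
  red_K V W K (sigma1 + sigma2) \in unitmx ->
  [/\ sqb_G1 Cf K B sigma1 = sqb_G1 (red_C V Cf) (red_K V W K) (red_B W B) sigma1,
      sqb_G1 Cf K B sigma2 = sqb_G1 (red_C V Cf) (red_K V W K) (red_B W B) sigma2,
      sqb_G1 Cf K B (sigma1 + sigma2)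
        = sqb_G1 (red_C V Cf) (red_K V W K) (red_B W B) (sigma1 + sigma2)
    & sqb_G2 Cf K B N H sigma1 sigma2
        = sqb_G2 (red_C V Cf) (red_K V W K) (red_B W B) (red_N V W N) (red_H V W H)
            sigma1 sigma2].
Proof.
move=> K1 K2 K12 _ _ V_span W_span Kr1 Kr2 Kr12.
move: V_span; rewrite tr_row_mx col_mx_sub.
case/andP=> /colspace_factor[Y1 g1_inV] /colspace_factor[Y2 g2_inV].
have [Z dual_inW] := colspace_factor W_span.
have lift1 := red_g1_lift K1 Kr1 g1_inV.
have lift2 := red_g1_lift K2 Kr2 g2_inV.
split; [exact: red_G1_right | exact: red_G1_right | |].
- exact: red_G1_left K12 Kr12 dual_inW.
- exact: red_G2 K12 Kr12 dual_inW lift1 lift2.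
Qed.
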